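(* Let $P\in\mathbb{R}^{p\times m}$, $Y_d\in\mathbb{R}^p$, and consider the plant $Y_k=PU_k+N_k$ with tracking error $E_k=Y_d-Y_k$, so that $E_{k+1}=E_k+P\bar U_k+D_k$ with $\bar U_k=-\Delta U_k$, $D_k=-\Delta N_k$. Let $K\in\mathbb{R}^{m\times p}$ and apply the $k$-state feedback $\bar U_k=-KE_k$ for all $k\in\mathbb{Z}_+$ (equivalently, the updating law $U_{k+1}=U_k+KE_k$). Then the resulting closed-loop system is robustly $k$-stable if and only if $\rho(I_p-PK)<1$.
   Context: Notation: $\mathbb{Z}_+=\{0,1,2,\dots\}$. For a sequence $(f_k)_{k\in\mathbb{Z}_+}$, $\Delta f_k=f_{k+1}-f_k$ and $\Delta^2 f_k=\Delta(\Delta f_k)$. $\|\cdot\|$ is a fixed vector norm, $\rho(\cdot)$ the spectral radius. In the plant, $U_k\in\mathbb{R}^m$ is the input, $Y_k\in\mathbb{R}^p$ the output, and $(N_k)_{k\in\mathbb{Z}_+}\subset\mathbb{R}^p$ an unknown bounded (iteration-varying) uncertainty sequence. Define $\beta_{\Delta N}=\sup_{k}\|\Delta N_k\|$ and $\beta^{ess}_{\Delta N}=\limsup_{k\to\infty}\|\Delta N_k\|$. A closed-loop system formed by this plant and an updating law for $U_k$ is called robustly $k$-stable if there exist class-$\mathcal{K}_\infty$ functions $\chi_1,\chi_2$ and a class-$\mathcal{KL}$ function $\zeta$ such that for every bounded initial condition $E_0$ (i.e. every initial input $U_0$) and every bounded uncertainty $(N_k)$ there is a finite bound $\beta_0\ge0$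 (generally depending on the initial condition) with (boundedness) $\|E_k\|\le\chi_1(\beta_{\Delta N})+\zeta(\beta_0,k)$ for all $k\in\mathbb{Z}_+$, and (attractiveness) $\limsup_{k\to\infty}\|E_k\|\le\chi_2(\beta^{ess}_{\Delta N})$. *)

From HB Require Import structures.
From mathcomp Require Import all_boot all_order all_algebra.
From mathcomp Require Import all_classical all_reals all_analysis.
From mathcomp Require Import complex.
Set Implicit Arguments. Unset Strict Implicit. Unset Printing Implicit Defensive.
Import Order.TTheory GRing.Theory Num.Theory.
Import numFieldNormedType.Exports.
Local Open Scope classical_set_scope.
Local Open Scope ring_scope.

Section Defs.
Variable R : realType.

Definition is_vnorm (p : nat) (nu : 'cV[R]_p -> R) : Prop :=
  [/\ forall x, 0 <= nu x,
      forall x, nu x = 0 -> x = 0,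
      forall (a : R) x, nu (a *: x) = `|a| * nu x &
      forall x y, nu (x + y) <= nu x + nu y].

(* Spectral radius of a real square matrix: the largest modulus of its
   (complex) eigenvalues (sup of an empty set is 0 by convention). *)
Definition spectral_radius (n : nat) (A : 'M[R]_n) : R :=
  sup ((@Normc.normc R) @`
         [set z : R[i] | eigenvalue (map_mx (real_complex R) A) z]).

Definition class_K (f : R -> R) : Prop :=
  [/\ {within [set x : R | 0 <= x], continuous f},
      f 0 = 0 &
      forall x y, 0 <= x -> x < y -> f x < f y].

Definition class_Kinf (f : R -> R) : Prop :=
  class_K f /\ forall M : R, exists x, 0 <= x /\ M < f x.

Definition class_KL (z : R -> nat -> R) : Prop :=
  (forall k, class_K (fun r => z r k)) /\
  (forall r, 0 <= r ->
     (forall k, z r k.+1 <= z r k) /\ (fun k => z r k) @ \oo --> (0 : R)).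

Definition bounded_seq (p : nat) (nu : 'cV[R]_p -> R) (N : nat -> 'cV[R]_p) :=
  exists M : R, forall k, nu (N k) <= M.

Definition dseq (p : nat) (N : nat -> 'cV[R]_p) : nat -> 'cV[R]_p :=
  fun k => N k.+1 - N k.

Definition beta_dN (p : nat) (nu : 'cV[R]_p -> R) (N : nat -> 'cV[R]_p) : R :=
  sup (range (fun k => nu (dseq N k))).

(* beta^ess_{Delta N} = limsup_k ||Delta N_k|| (finite for bounded N) *)
Definition beta_ess_dN (p : nat) (nu : 'cV[R]_p -> R) (N : nat -> 'cV[R]_p) : R :=
  fine (limn_esup (fun k => (nu (dseq N k))%:E)).

Fixpoint cl_input (p m : nat) (P : 'M[R]_(p, m)) (K : 'M[R]_(m, p))
  (Yd : 'cV[R]_p) (N : nat -> 'cV[R]_p) (U0 : 'cV[R]_m) (k : nat) : 'cV[R]_m :=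
  match k with
  | 0 => U0
  | k'.+1 => let U := cl_input P K Yd N U0 k' in
             U + K *m (Yd - (P *m U + N k'))
  end.

Definition cl_error (p m : nat) (P : 'M[R]_(p, m)) (K : 'M[R]_(m, p))
  (Yd : 'cV[R]_p) (N : nat -> 'cV[R]_p) (U0 : 'cV[R]_m) (k : nat) : 'cV[R]_p :=
  Yd - (P *m cl_input P K Yd N U0 k + N k).

Definition robustly_k_stable (p m : nat) (nu : 'cV[R]_p -> R)
  (P : 'M[R]_(p, m)) (K : 'M[R]_(m, p)) (Yd : 'cV[R]_p) : Prop :=
  exists (chi1 chi2 : R -> R) (zeta : R -> nat -> R),
    [/\ class_Kinf chi1, class_Kinf chi2, class_KL zeta &
    forall (U0 : 'cV[R]_m) (N : nat -> 'cV[R]_p), bounded_seq nu N ->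
      exists beta0 : R, 0 <= beta0 /\
        (forall k, nu (cl_error P K Yd N U0 k)
                     <= chi1 (beta_dN nu N) + zeta beta0 k) /\
        (limn_esup (fun k => (nu (cl_error P K Yd N U0 k))%:E)
           <= (chi2 (beta_ess_dN nu N))%:E)%E].
End Defs.

(* Write A := I - P K.  The error obeys E_(k+1) = A E_k - dN_k, so
   E_(J+t) = A^t E_J - sum_(j<t) A^(t-1-j) dN_(J+j).
   If rho(A) < 1 then A^k -> 0: by Cayley-Hamilton the product of the factors
   A - z over the eigenvalues z vanishes, and multiplying by one factor with
   |z| < 1 cannot stop a sequence from tending to 0.  Submultiplicativity then
   upgrades A^k -> 0 to |A^k| <= C lam^k with lam < 1, and the convolution
   formula gives the required estimates with linear gains and a geometrically
   decaying transient.  Conversely, for U_0 = 0 and the constant uncertainty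
   N_k = Y_d - x the error is E_k = A^k x, which the KL bound forces to 0; for
   a left eigenvector v A = z v this gives |z|^k |v_j| <= sum_i |v_i| |A^k_ij|
   -> 0, hence |z| < 1. *)

From HB Require Import structures.
From mathcomp Require Import all_boot all_order all_algebra.
From mathcomp Require Import all_classical all_reals all_analysis.
From mathcomp Require Import complex.
From mathcomp Require Import ring lra.
Import Order.TTheory GRing.Theory Num.Theory.
Import numFieldNormedType.Exports.
Local Open Scope ring_scope.
Local Open Scope classical_set_scope.
Set Implicit Arguments. Unset Strict Implicit. Unset Printing Implicit Defensive.

Section MatrixNorm.
Variable R : realFieldType.

Lemma mx_norm_entry m n (M : 'M[R]_(m, n)) i j : `|M i j| <= `|M|.
Proof.
rewrite [leRHS]/Num.norm /= mx_normrE; apply/bigmax_geP; right => /=.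
by exists (i, j).
Qed.

Lemma mx_norm_le_entries m n (M : 'M[R]_(m, n)) (c : R) :
  0 <= c -> (forall i j, `|M i j| <= c) -> `|M| <= c.
Proof.
move=> c0 hM; rewrite [leLHS]/Num.norm /= mx_normrE.
by apply: bigmax_le => // -[i j] _; exact: hM.
Qed.

Lemma mx_norm_trmx m n (M : 'M[R]_(m, n)) : `|M^T| = `|M|.
Proof.
apply/le_anti/andP; split; apply: mx_norm_le_entries => // i j.
  by rewrite mxE mx_norm_entry.
by have := mx_norm_entry M^T j i; rewrite mxE.
Qed.

Lemma trmx_continuous m n : continuous (@trmx R m n).
Proof.
move=> M A /nbhs_ballP [e e0 hA]; apply/nbhs_ballP; exists e => // N hN.
by apply: hA; move: hN; rewrite -!ball_normE /= -linearB /= mx_norm_trmx.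
Qed.

Lemma mx_normM m n l (M : 'M[R]_(m, n)) (N : 'M[R]_(n, l)) :
  `|M *m N| <= n%:R * (`|M| * `|N|).
Proof.
apply: mx_norm_le_entries => [|i k]; first by rewrite mulr_ge0 ?mulr_ge0.
rewrite mxE (le_trans (ler_norm_sum _ _ _)) //.
rewrite mulr_natl -[n in _ *+ n]card_ord -sumr_const; apply: ler_sum => j _.
by rewrite normrM ler_pM ?mx_norm_entry.
Qed.

Lemma mx_cvg0_entries m n (M : nat -> 'M[R]_(m, n)) :
  (forall i j, `|M k i j| @[k --> \oo] --> 0) -> M k @[k --> \oo] --> (0 : 'M[R]_(m, n)).
Proof.
move=> hM; apply/cvgr0Pnorm_lt => e e0.
have : \forall k \near \oo, forall ij : 'I_m * 'I_n, `|M k ij.1 ij.2| < e.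
  apply: filter_forall => -[i j]; have /cvgr0Pnorm_lt := hM i j.
  by move=> /(_ e e0); apply: filterS => k; rewrite normr_id.
apply: filterS => k hk; rewrite [ltLHS]/Num.norm /= mx_normrE.
by apply: bigmax_lt => // ij _; exact: hk.
Qed.

End MatrixNorm.

Section VectorNorm.
Variables (R : realType) (p : nat) (nu : 'cV[R]_p -> R).
Hypothesis nu_norm : is_vnorm nu.

Lemma vnorm_ge0 x : 0 <= nu x. Proof. by case: nu_norm. Qed.

Lemma vnormZ (a : R) x : nu (a *: x) = `|a| * nu x. Proof. by case: nu_norm. Qed.

Lemma vnormD x y : nu (x + y) <= nu x + nu y. Proof. by case: nu_norm. Qed.

Lemma vnorm0 : nu 0 = 0.
Proof. by rewrite -(scale0r (0 : 'cV[R]_p)) vnormZ normr0 mul0r. Qed.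

Lemma vnormN x : nu (- x) = nu x.
Proof. by rewrite -scaleN1r vnormZ normrN normr1 mul1r. Qed.

Lemma vnorm_gt0 x : x != 0 -> 0 < nu x.
Proof.
move=> x0; rewrite lt_neqAle vnorm_ge0 andbT eq_sym.
have [_ nu_eq0 _ _] := nu_norm.
by apply: contra x0 => /eqP/nu_eq0 ->.
Qed.

Lemma vnorm_sum (I : Type) (r : seq I) (F : I -> 'cV[R]_p) :
  nu (\sum_(i <- r) F i) <= \sum_(i <- r) nu (F i).
Proof.
elim/big_rec2: _ => [|i y1 y2 _ h]; first by rewrite vnorm0.
by rewrite (le_trans (vnormD _ _)) // lerD2l.
Qed.

Lemma ler_dist_vnorm x y : `|nu x - nu y| <= nu (x - y).
Proof.
rewrite ler_norml; apply/andP; split.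
  by have := vnormD (y - x) x; rewrite subrK -opprB vnormN; lra.
by have := vnormD (x - y) y; rewrite subrK; lra.
Qed.

Lemma vnorm_le_mx_norm : exists2 c, 0 < c & forall x, nu x <= c * `|x|.
Proof.
exists (\sum_(i < p) nu (delta_mx i 0) + 1) => [|x].
  by rewrite ltr_wpDl // sumr_ge0 // => i _; exact: vnorm_ge0.
rewrite {1}(matrix_sum_delta x) (le_trans (vnorm_sum _ _)) //.
rewrite mulrDl mulr_suml ler_wpDr ?mul1r ?normr_ge0 //.
apply: ler_sum => i _; rewrite big_ord1 vnormZ mulrC ler_wpM2l ?vnorm_ge0 //.
exact: mx_norm_entry.
Qed.

Lemma vnorm_continuous : continuous nu.
Proof.
have [c c0 hc] := vnorm_le_mx_norm.
move=> x A /nbhs_ballP [e e0 hA]; apply/nbhs_ballP.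
exists (e / c) => [|y]; first exact: divr_gt0.
rewrite -ball_normE /= => hy; apply: hA; rewrite -ball_normE /=.
rewrite (le_lt_trans (ler_dist_vnorm _ _)) // (le_lt_trans (hc _)) //.
by rewrite mulrC -ltr_pdivlMr.
Qed.

(* [nu] attains a positive minimum on the compact unit sphere of the max norm. *)
Lemma mx_norm_le_vnorm : exists2 c, 0 < c & forall x, `|x| <= c * nu x.
Proof.
have [p0|p_gt0] := posnP p.
  exists 1 => // x; have -> : x = 0.
    by apply/matrixP => i; suff : (i < 0)%N by []; rewrite -[0%N]p0.
  by rewrite normr0 mul1r vnorm_ge0.
pose S := [set r : 'rV[R]_p | `|r| = 1].
have S0 : S !=set0.
  pose e : 'rV[R]_p := delta_mx 0 (Ordinal p_gt0).
  have e0 : e != 0.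
    by apply/eqP => /matrixP/(_ 0 (Ordinal p_gt0))/eqP; rewrite !mxE !eqxx oner_eq0.
  exists (`|e|^-1 *: e); rewrite /S /= normrZ ger0_norm ?invr_ge0 //.
  by rewrite mulVf // normr_eq0.
have Sc : compact S.
  apply: bounded_closed_compact.
    by exists 1; split => [|M M1 r /= ->]; [exact: num_real | exact: ltW].
  apply: (@preimage_closed _ _ (@Num.norm _ 'rV[R]_p) [set x | x = 1]).
    by move=> r _; exact: norm_continuous.
  exact: closed_eq.
have g_cont : continuous (fun r : 'rV[R]_p => nu r^T).
  by move=> r; apply: continuous_comp; [exact: trmx_continuous|exact: vnorm_continuous].
have [c /set_mem Sc_ cmin] := EVT_min_rV S0 Sc (continuous_subspaceT g_cont).
have nuc_gt0 : 0 < nu c^T.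
  apply: vnorm_gt0; apply/eqP => /(congr1 trmx); rewrite trmxK trmx0 => c0.
  by move: Sc_; rewrite /S /= c0 normr0 => /esym/eqP; rewrite oner_eq0.
exists (nu c^T)^-1 => [|x]; first by rewrite invr_gt0.
have [->|x0] := eqVneq x 0; first by rewrite normr0 vnorm0 mulr0.
have x_gt0 : 0 < `|x| by rewrite normr_gt0.
have /cmin : (`|x|^-1 *: x^T) \in S.
  by rewrite inE /S /= normrZ mx_norm_trmx ger0_norm ?invr_ge0 ?ltW ?mulVf ?gt_eqF.
rewrite linearZ /= trmxK vnormZ ger0_norm ?invr_ge0 ?(ltW x_gt0) //.
by rewrite !ler_pdivlMl // mulrC.
Qed.

Lemma vnorm_expmx_le (A : 'M[R]_p) (C lam : R) :
  0 < C -> (forall k, `|A ^+ k| <= C * lam ^+ k) ->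
  exists2 B, 0 < B & forall k x, nu (A ^+ k *m x) <= B * lam ^+ k * nu x.
Proof.
move=> C_gt0 AC; have [c2 c2_gt0 nu_le] := vnorm_le_mx_norm.
have [c1 c1_gt0 le_nu] := mx_norm_le_vnorm.
exists (c2 * (p.+1%:R * C * c1)) => [|k x]; first by rewrite !mulr_gt0.
apply: le_trans (nu_le _) _; rewrite -!mulrA ler_wpM2l ?(ltW c2_gt0) //.
have -> : C * (c1 * (lam ^+ k * nu x)) = C * lam ^+ k * (c1 * nu x) by ring.
apply: le_trans (mx_normM _ _) _.
rewrite ler_pM ?mulr_ge0 ?ler_nat //.
by apply: ler_pM; rewrite ?AC ?le_nu.
Qed.

Lemma mx_cvg0_vnorm l (M : nat -> 'M[R]_(p, l)) :
  (forall x, nu (M k *m x) @[k --> \oo] --> 0) -> M k @[k --> \oo] --> (0 : 'M[R]_(p, l)).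
Proof.
move=> Mx0; have [c c_gt0 le_nu] := mx_norm_le_vnorm.
apply: mx_cvg0_entries => i j.
pose e : 'cV[R]_l := delta_mx j 0.
apply: (@squeeze_cvgr _ _ _ _ (cst 0) (fun k => c * nu (M k *m e))).
- apply: nearW => k; rewrite normr_ge0 /=.
  have -> : M k i j = (M k *m e) i 0 by rewrite -colE mxE.
  exact: le_trans (mx_norm_entry _ _ _) (le_nu _).
- exact: cvg_cst.
- by rewrite -(mulr0 c); apply: cvgMr; exact: Mx0.
Qed.

End VectorNorm.

Section Contraction.
Variable R : realType.
Local Notation normc := (@Normc.normc R).

Lemma contraction_cvg0 (q : R) (a r : nat -> R) :
  0 <= q < 1 -> (forall k, 0 <= a k) -> (forall k, a k.+1 <= q * a k + r k) ->
  r k @[k --> \oo] --> 0 -> a k @[k --> \oo] --> 0.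
Proof.
move=> /andP[q0 q1] a0 a_rec /cvgr0_norm_le r0; apply/cvgr0Pnorm_le => e e0.
have e2 : 0 < e / 2 by rewrite divr_gt0.
have q1' : 0 < 1 - q by rewrite subr_gt0.
have [N _ rN] := r0 _ (mulr_gt0 e2 q1').
have aN t : a (N + t)%N <= q ^+ t * a N + e / 2.
  elim: t => [|t IH]; first by rewrite addn0 expr0 mul1r lerDl ltW.
  rewrite addnS (le_trans (a_rec _)) //.
  have := le_trans (ler_norm _) (rN (N + t)%N (leq_addr _ _)).
  by have := ler_wpM2l q0 IH; rewrite exprS; nra.
have : q ^+ t * a N @[t --> \oo] --> 0.
  by rewrite -(mul0r (a N)); apply: cvgMl; apply: cvg_expr; rewrite ger0_norm.
move=> /cvgr0_norm_le/(_ _ e2) [T _ qT].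
exists (N + T)%N => // k /= NTk; rewrite ger0_norm //.
have Nk : (N <= k)%N by apply: leq_trans NTk; rewrite leq_addr.
rewrite -(subnKC Nk) (le_trans (aN _)) //.
have TkN : (T <= k - N)%N by rewrite leq_subRL.
by have := le_trans (ler_norm _) (qT _ TkN); lra.
Qed.

Lemma normc_ge0 (z : R[i]) : 0 <= normc z.
Proof. exact: (@normr_ge0 _ (Rcomplex R)). Qed.

Lemma normc_sum (I : Type) (r : seq I) (F : I -> R[i]) :
  normc (\sum_(i <- r) F i) <= \sum_(i <- r) normc (F i).
Proof. exact: (@ler_norm_sum _ (Rcomplex R)). Qed.

Lemma normcX (z : R[i]) k : normc (z ^+ k) = normc z ^+ k.
Proof.
by elim: k => [|k IH]; rewrite ?expr0 ?Normc.normc1 // !exprS Normc.normcM IH.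
Qed.

Lemma normc_real (x : R) : normc (x%:C)%C = `|x|.
Proof. by rewrite /Normc.normc /= expr0n addr0 sqrtr_sqr. Qed.

Lemma normc_contraction_cvg0 (z : R[i]) (s : nat -> R[i]) :
  normc z < 1 -> normc (s k.+1 - z * s k) @[k --> \oo] --> 0 ->
  normc (s k) @[k --> \oo] --> 0.
Proof.
move=> z1; apply: (contraction_cvg0 (q := normc z)) => [|k|k].
- by rewrite normc_ge0.
- exact: normc_ge0.
- by rewrite -Normc.normcM addrC -{1}(subrK (z * s k) (s k.+1)) le_normcD.
Qed.

End Contraction.

Section SpectralRadius.
Variable R : realType.
Local Notation normc := (@Normc.normc R).
Local Notation complex_mx := (map_mx (real_complex R)).

Lemma horner_mx_prod_XsubC_cvg0 n (B : 'M[R[i]]_n.+1) (rs : seq R[i]) :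
  (forall z, z \in rs -> normc z < 1) ->
  (forall i j, normc ((horner_mx B (\prod_(z <- rs) ('X - z%:P)) *m B ^+ k) i j)
                 @[k --> \oo] --> 0) ->
  forall i j, normc ((B ^+ k) i j) @[k --> \oo] --> 0.
Proof.
elim: rs => [|z rs IH] rs1 hB i j.
  by have := hB i j; rewrite big_nil rmorph1; under eq_fun do rewrite mul1mx.
apply: IH => [w w_rs|{}i {}j]; first by rewrite rs1 // in_cons w_rs orbT.
set Q := horner_mx B (\prod_(w <- rs) ('X - w%:P)).
apply: (normc_contraction_cvg0 (z := z)); first by rewrite rs1 ?mem_head.
have HQ k : horner_mx B (\prod_(w <- z :: rs) ('X - w%:P)) *m B ^+ k =
    Q *m B ^+ k.+1 - z *: (Q *m B ^+ k).
  rewrite big_cons rmorphM /= rmorphB /= horner_mx_X horner_mx_C -/Q -mulmxE.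
  have BQ : B *m Q = Q *m B by exact: comm_mx_horner.
  by rewrite mulmxBl mul_scalar_mx BQ mulmxBl -mulmxA -scalemxAl exprS.
have entry (M N : 'M[R[i]]_n.+1) : (M - z *: N) i j = M i j - z * N i j.
  by rewrite !mxE.
by have := hB i j; under eq_fun do rewrite HQ entry.
Qed.

Lemma complex_eigenvalues_roots n (A : 'M[R]_n) :
  exists2 rs : seq R[i], char_poly (complex_mx A) = \prod_(z <- rs) ('X - z%:P)
    & forall z, eigenvalue (complex_mx A) z = (z \in rs).
Proof.
have [rs Ars] := closed_field_poly_normal (char_poly (complex_mx A)).
rewrite (monicP (char_poly_monic _)) scale1r in Ars.
by exists rs => // z; rewrite eigenvalue_root_char Ars root_prod_XsubC.
Qed.

Lemma spectral_radius_lt1_eigenvalueP n (A : 'M[R]_n) :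
  spectral_radius A < 1 <-> forall z, eigenvalue (complex_mx A) z -> normc z < 1.
Proof.
have [rs _ eigE] := complex_eigenvalues_roots A.
set S := normc @` [set z | eigenvalue (complex_mx A) z].
have S_ub : ubound S (\big[Num.max/0]_(w <- rs) normc w).
  by move=> _ [z /= + <-]; rewrite eigE => z_rs; exact: le_bigmax_seq.
split=> [rho1 z Az|eig1].
  apply: le_lt_trans rho1; apply: sup_upper_bound; last by exists z.
  by split; [exists (normc z), z | exists (\big[Num.max/0]_(w <- rs) normc w)].
rewrite /spectral_radius -/S; have [->|S0] := eqVneq S set0; first by rewrite sup0.
apply: (@le_lt_trans _ _ (\big[Num.max/0]_(w <- rs) normc w)).
  by apply: ge_sup => //; exact/set0P.
by rewrite big_seq; apply: bigmax_lt => // z; rewrite -eigE; exact: eig1.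
Qed.

Lemma expmx_cvg0_eigenvalue_lt1 n (A : 'M[R]_n) :
  (forall z, eigenvalue (complex_mx A) z -> normc z < 1) ->
  A ^+ k @[k --> \oo] --> (0 : 'M[R]_n).
Proof.
case: n A => [|n] A eig1.
  by under eq_fun do rewrite [A ^+ _]flatmx0; exact: cvg_cst.
have [rs CA eigE] := complex_eigenvalues_roots A.
have rs1 z : z \in rs -> normc z < 1 by rewrite -eigE; exact: eig1.
have CH k (i j : 'I_n.+1) :
    normc ((horner_mx (complex_mx A) (\prod_(z <- rs) ('X - z%:P))
            *m complex_mx A ^+ k) i j) = 0.
  by rewrite -CA Cayley_Hamilton mul0mx mxE Normc.normc0.
apply: mx_cvg0_entries => i j.
suff : normc ((complex_mx A ^+ k) i j) @[k --> \oo] --> 0.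
  by under eq_fun do rewrite -rmorphXn mxE normc_real.
apply: (horner_mx_prod_XsubC_cvg0 rs1) => i' j'.
by under eq_fun do rewrite CH; exact: cvg_cst.
Qed.

Lemma eigenvalue_lt1_expmx_cvg0 n (A : 'M[R]_n) z :
  A ^+ k @[k --> \oo] --> (0 : 'M[R]_n) ->
  eigenvalue (complex_mx A) z -> normc z < 1.
Proof.
move=> A0 /eigenvalueP [v vA v0].
have vAk k : v *m complex_mx A ^+ k = z ^+ k *: v.
  elim: k => [|k IH]; first by rewrite expr0 mulmx1 scale1r.
  by rewrite exprSr -mulmxE mulmxA IH -scalemxAl vA scalerA -exprSr.
have [j vj] : exists j, v 0 j != 0.
  apply/existsP; apply: contraNT v0 => /existsPn vj0.
  by apply/eqP/rowP => j; rewrite mxE; have /negPn/eqP := vj0 j.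
have vj_gt0 : 0 < normc (v 0 j) by rewrite (@normr_gt0 _ (Rcomplex R)).
pose c := \sum_i normc (v 0 i).
have zk_le k : normc z ^+ k * normc (v 0 j) <= c * `|A ^+ k|.
  rewrite -normcX -Normc.normcM.
  have := congr1 (fun M : 'rV[R[i]]_n => M 0 j) (vAk k); rewrite /= !mxE => <-.
  rewrite (le_trans (normc_sum _ _)) // mulr_suml; apply: ler_sum => i _.
  by rewrite Normc.normcM -rmorphXn mxE normc_real ler_wpM2l ?normc_ge0 ?mx_norm_entry.
have : c * `|A ^+ k| @[k --> \oo] --> c * `|0 : 'M[R]_n|.
  by apply: cvgMr; exact: cvg_norm.
rewrite normr0 mulr0 => /cvgr0_norm_lt/(_ _ vj_gt0) [N _ /(_ N (leqnn N))].
have c_ge0 : 0 <= c by apply: sumr_ge0 => i _; exact: normc_ge0.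
rewrite ger0_norm ?mulr_ge0 // => cAN.
rewrite ltNge; apply/negP => z1.
have := le_lt_trans (zk_le N) cAN; apply/negP.
by rewrite -leNgt ler_peMl ?normc_ge0 // exprn_ege1.
Qed.

Lemma spectral_radius_lt1P n (A : 'M[R]_n) :
  spectral_radius A < 1 <-> A ^+ k @[k --> \oo] --> (0 : 'M[R]_n).
Proof.
rewrite spectral_radius_lt1_eigenvalueP; split; first exact: expmx_cvg0_eigenvalue_lt1.
by move=> A0 z; exact: eigenvalue_lt1_expmx_cvg0.
Qed.

End SpectralRadius.

Section GeometricDecay.
Variable R : realType.

Lemma exists_root_half (m : nat) : (0 < m)%N ->
  exists lam : R, [/\ 0 < lam, lam < 1 & lam ^+ m = 2^-1].
Proof.
move=> m_gt0; exists (2^-1 `^ m%:R^-1).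
have lam_m : (2^-1 `^ m%:R^-1) ^+ m = 2^-1 :> R.
  rewrite -powR_mulrn ?powR_ge0 // -powRrM mulVf ?powRr1 ?invr_ge0 //.
  by rewrite pnatr_eq0 -lt0n.
split => //; rewrite ltNge; apply/negP => /(exprn_ege1 m).
by rewrite lam_m invf_ge1 //; lra.
Qed.

Lemma expmx_cvg0_geometric n (A : 'M[R]_n) :
  A ^+ k @[k --> \oo] --> (0 : 'M[R]_n) ->
  exists C lam : R,
    [/\ 0 < C, 0 < lam, lam < 1 & forall k, `|A ^+ k| <= C * lam ^+ k].
Proof.
move=> A0.
have : n%:R * `|A ^+ k| @[k --> \oo] --> n%:R * `|0 : 'M[R]_n|.
  by apply: cvgMr; exact: cvg_norm.
have half_gt0 : 0 < 2^-1 :> R by rewrite invr_gt0.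
rewrite normr0 mulr0 => /cvgr0_norm_le/(_ _ half_gt0) [N _ /(_ N.+1 (leqnSn N))].
set m := N.+1; rewrite ger0_norm ?mulr_ge0 // => Am.
(* Every block of [m] steps halves the norm, and [lam ^+ m = 1/2]. *)
have Aqm q r : `|A ^+ (q * m + r)| <= 2^-1 ^+ q * `|A ^+ r|.
  elim: q => [|q IH]; first by rewrite mul0n add0n expr0 mul1r.
  rewrite mulSn -addnA exprD -mulmxE (le_trans (mx_normM _ _)) //.
  by rewrite [leLHS]mulrA exprS -[leRHS]mulrA ler_pM ?mulr_ge0.
pose G := \big[Num.max/0]_(r < m) `|A ^+ r|.
have G_ge0 : 0 <= G by exact: bigmax_ge_id.
have [lam [lam_gt0 lam_lt1 lam_m]] := exists_root_half (ltn0Sn N).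
exists (2 * G + 1), lam; split => // [|k]; first by rewrite ltr_pwDr // mulr_ge0.
set q := (k %/ m)%N; set r := (k %% m)%N.
have r_lt : (r < m)%N by rewrite ltn_pmod.
have Gr : `|A ^+ r| <= G.
  exact: (le_bigmax _ (fun i : 'I_m => `|A ^+ i|) (Ordinal r_lt)).
have lam_r : 2^-1 <= lam ^+ r by rewrite -lam_m ler_wiXn2l ?ltW // ltnW.
rewrite (divn_eq k m) -/q -/r (le_trans (Aqm _ _)) // -lam_m -exprM mulnC exprD.
set X := lam ^+ (q * m); have X0 : 0 <= X by rewrite exprn_ge0 // ltW.
apply: (@le_trans _ _ (X * G)); first by rewrite ler_wpM2l.
by have := mulr_ge0 X0 G_ge0; nra.
Qed.

Lemma sum_expr_rev_le (lam : R) t :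
  0 < lam < 1 -> \sum_(j < t) lam ^+ (t - j.+1) <= (1 - lam)^-1.
Proof.
move=> /andP[lam_gt0 lam_lt1]; rewrite (reindex_inj rev_ord_inj) /=.
have := geometric_le_lim t ler01 lam_gt0; rewrite gtr0_norm // => /(_ lam_lt1).
rewrite /series /= big_mkord mul1r; apply: le_trans; apply: ler_sum => j _.
by rewrite mul1r (subnSK (ltn_ord j)) (subKn (ltnW (ltn_ord j))).
Qed.

End GeometricDecay.

Section LimnEsup.
Variable R : realType.
Local Open Scope ereal_scope.

Lemma limn_esup_le_near (u : nat -> R) (l : R) :
  (forall e : R, (0 < e)%R -> \forall k \near \oo, (u k <= l + e)%R) ->
  limn_esup (fun k => (u k)%:E) <= l%:E.
Proof.
move=> ul; apply/lee_addgt0Pr => e e0; have [N _ uN] := ul e e0.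
apply: le_trans (ereal_inf_lbound _) _.
  by exists [set k | (N <= k)%N] => //; exists N.
by apply: ge_ereal_sup => _ [k /uN/= ? <-]; rewrite lee_fin.
Qed.

Lemma limn_esup_lt_near (u : nat -> R) (x : R) :
  limn_esup (fun k => (u k)%:E) < x%:E -> \forall k \near \oo, (u k < x)%R.
Proof.
move=> /ereal_inf_lt [_ [V [N _ NV] <-]] supV; exists N => // k /NV Vk.
by rewrite -lte_fin (le_lt_trans _ supV) //; apply: ereal_sup_ubound; exists k.
Qed.

Lemma limn_esup_fin_num (u : nat -> R) (M : R) :
  (forall k, 0 <= u k <= M)%R -> limn_esup (fun k => (u k)%:E) \is a fin_num.
Proof.
move=> u_bnd; rewrite ge0_fin_numE; last first.
  apply: limf_esup_ge0 => [[N _ /(_ N (leqnn N))]|k] //.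
  by rewrite lee_fin; case/andP: (u_bnd k).
apply: le_lt_trans (ltry M); apply: limn_esup_le_near => e e0; near=> k.
by case/andP: (u_bnd k) => _ /le_trans; apply; rewrite lerDl ltW.
Unshelve. all: by end_near.
Qed.

End LimnEsup.

Section ComparisonFunctions.
Variable R : realType.

Lemma class_K_scale (a : R) : 0 < a -> class_K (fun r => a * r).
Proof.
move=> a_gt0; split => [||x y _ xy]; last by rewrite ltr_pM2l.
  by apply: continuous_subspaceT => x; apply: cvgMr; exact: cvg_id.
by rewrite mulr0.
Qed.

Lemma class_Kinf_scale (a : R) : 0 < a -> class_Kinf (fun r => a * r).
Proof.
move=> a_gt0; split => [|M]; first exact: class_K_scale.
exists ((`|M| + 1) / a); rewrite divr_ge0 ?ltW ?ltr_wpDl //.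
by rewrite mulrC divfK ?gt_eqF // (le_lt_trans (ler_norm M)) // ltrDl.
Qed.

Lemma class_KL_geometric (a lam : R) :
  0 < a -> 0 < lam < 1 -> class_KL (fun r k => a * r * lam ^+ k).
Proof.
move=> a_gt0 /andP[lam_gt0 lam_lt1]; split=> [k|r r_ge0].
  have -> : (fun r => a * r * lam ^+ k) = (fun r => a * lam ^+ k * r).
    by apply/funext => r; rewrite mulrAC.
  by apply: class_K_scale; rewrite mulr_gt0 // exprn_gt0.
split=> [k|].
  have ark_ge0 : 0 <= a * r * lam ^+ k.
    exact: mulr_ge0 (mulr_ge0 (ltW a_gt0) r_ge0) (exprn_ge0 _ (ltW lam_gt0)).
  by rewrite exprS mulrCA ler_piMl // ltW.
rewrite -(mulr0 (a * r)); apply: cvgMr; apply: cvg_expr.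
by rewrite gtr0_norm.
Qed.

End ComparisonFunctions.

Section Disturbance.
Variables (R : realType) (p : nat) (nu : 'cV[R]_p -> R).
Hypothesis nu_norm : is_vnorm nu.

Lemma beta_dN_cst (v : 'cV[R]_p) : beta_dN nu (fun=> v) = 0.
Proof.
rewrite /beta_dN /dseq /= subrr vnorm0 // -[RHS](sup1 0); congr sup.
by apply/seteqP; split => [_ [k _ <-] //|_ ->]; exists 0%N.
Qed.

Variable N : nat -> 'cV[R]_p.
Hypothesis N_bnd : bounded_seq nu N.

Lemma dseq_bounded : exists M, forall k, nu (dseq N k) <= M.
Proof.
have [M NM] := N_bnd; exists (M + M) => k.
by rewrite (le_trans (vnormD nu_norm _ _)) // vnormN // lerD.
Qed.

Lemma vnorm_dseq_le_beta_dN k : nu (dseq N k) <= beta_dN nu N.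
Proof.
have [M dNM] := dseq_bounded; apply: sup_upper_bound; last by exists k.
by split; [exists (nu (dseq N k)), k | exists M => _ [j _ <-]].
Qed.

Lemma beta_ess_dNE :
  limn_esup (fun k => (nu (dseq N k))%:E) = (beta_ess_dN nu N)%:E.
Proof.
have [M dNM] := dseq_bounded; rewrite fineK //.
apply: (@limn_esup_fin_num _ (fun k => nu (dseq N k)) M) => k.
by rewrite vnorm_ge0 // dNM.
Qed.

End Disturbance.

Section ClosedLoop.
Variables (R : realType) (p m : nat).
Variables (P : 'M[R]_(p, m)) (K : 'M[R]_(m, p)) (Yd : 'cV[R]_p).
Local Notation A := (1%:M - P *m K).
Local Notation E := (cl_error P K Yd).

Lemma cl_errorS N U0 k : E N U0 k.+1 = A *m E N U0 k - dseq N k.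
Proof.
rewrite /cl_error /dseq /=; set U := cl_input P K Yd N U0 k.
rewrite mulmxDr mulmxA mulmxBl mul1mx.
move: (P *m K *m (Yd - (P *m U + N k))) (P *m U) (N k) (N k.+1) => b a c d.
by apply/matrixP => i j; rewrite !mxE; lra.
Qed.

Lemma cl_error_shift N U0 J t :
  E N U0 (J + t) = A ^+ t *m E N U0 J - \sum_(j < t) A ^+ (t - j.+1) *m dseq N (J + j).
Proof.
have AAk k : A *m A ^+ k = A ^+ k.+1 by rewrite exprS.
elim: t => [|t IH]; first by rewrite addn0 expr0 mul1mx big_ord0 subr0.
rewrite big_ord_recr /= addnS cl_errorS IH subnn expr0 mul1mx.
rewrite mulmxBr mulmxA AAk mulmx_sumr [in RHS]opprD addrA.
congr (_ - _ - _); apply: eq_bigr => j _.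
by rewrite mulmxA AAk -subSn.
Qed.

Lemma cl_error_cst x k : E (fun=> Yd - x) 0 k = A ^+ k *m x.
Proof.
have := cl_error_shift (fun=> Yd - x) 0 0 k; rewrite add0n => ->.
rewrite big1 ?subr0 => [|j _]; last by rewrite /dseq subrr mulmx0.
by rewrite /cl_error /= mulmx0 add0r subKr.
Qed.

Variable nu : 'cV[R]_p -> R.
Hypothesis nu_norm : is_vnorm nu.

Lemma cl_error_vnorm_le N U0 (B lam D : R) J t :
  0 <= B -> 0 < lam < 1 -> (forall k x, nu (A ^+ k *m x) <= B * lam ^+ k * nu x) ->
  (forall j, nu (dseq N (J + j)) <= D) ->
  nu (E N U0 (J + t)) <= B * lam ^+ t * nu (E N U0 J) + B / (1 - lam) * D.
Proof.
move=> B_ge0 lam01 AB dND; have /andP[lam_gt0 _] := lam01.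
have D_ge0 : 0 <= D := le_trans (vnorm_ge0 nu_norm _) (dND 0%N).
rewrite cl_error_shift (le_trans (vnormD nu_norm _ _)) // vnormN // lerD ?AB //.
apply: le_trans (vnorm_sum nu_norm _ _) _.
apply: (@le_trans _ _ (\sum_(j < t) B * lam ^+ (t - j.+1) * D)).
  apply: ler_sum => j _; apply: le_trans (AB _ _) _.
  by rewrite ler_wpM2l ?mulr_ge0 ?exprn_ge0 ?(ltW lam_gt0).
rewrite -mulr_suml -mulr_sumr ler_wpM2r // ler_wpM2l //.
exact: sum_expr_rev_le.
Qed.

Lemma robustly_k_stable_geometric (B lam : R) :
  0 < B -> 0 < lam < 1 -> (forall k x, nu (A ^+ k *m x) <= B * lam ^+ k * nu x) ->
  robustly_k_stable nu P K Yd.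
Proof.
move=> B_gt0 lam01 AB; have /andP[lam_gt0 lam_lt1] := lam01.
pose a := B / (1 - lam); have a_gt0 : 0 < a by rewrite divr_gt0 // subr_gt0.
exists (fun r => a * r), (fun r => a * r), (fun r k => B * r * lam ^+ k).
split; [exact: class_Kinf_scale|exact: class_Kinf_scale|exact: class_KL_geometric|].
move=> U0 N N_bnd; exists (nu (E N U0 0)); split; first exact: vnorm_ge0.
split=> [k|].
  have := @cl_error_vnorm_le N U0 B lam (beta_dN nu N) 0 k (ltW B_gt0) lam01 AB.
  rewrite add0n => /(_ (fun j => vnorm_dseq_le_beta_dN nu_norm N_bnd _)) Ek_le.
  by rewrite addrC mulrAC.
apply: limn_esup_le_near => e e_gt0; set b := beta_ess_dN nu N.
pose e' := e / (a + 1); have e'_gt0 : 0 < e' by rewrite divr_gt0 ?ltr_wpDl ?ltW.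
have [J _ dNJ] : \forall k \near \oo, nu (dseq N k) < b + e'.
  by apply: limn_esup_lt_near; rewrite beta_ess_dNE // lte_fin ltrDl.
have : B * lam ^+ t * nu (E N U0 J) @[t --> \oo] --> 0.
  rewrite -(mul0r (nu (E N U0 J))) -(mulr0 B).
  by apply: cvgMl; apply: cvgMr; apply: cvg_expr; rewrite gtr0_norm.
move=> /cvgr0_norm_le/(_ _ e'_gt0) [T _ geomT].
exists (J + T)%N => // k JTk; have Jk : (J <= k)%N by rewrite (leq_trans _ JTk) ?leq_addr.
have TkJ : (T <= k - J)%N by rewrite leq_subRL.
rewrite -(subnKC Jk).
have := @cl_error_vnorm_le N U0 B lam (b + e') J (k - J) (ltW B_gt0) lam01 AB.
move=> /(_ (fun j => ltW (dNJ _ (leq_addr _ _)))) /le_trans; apply.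
have := le_trans (ler_norm _) (geomT _ TkJ).
have -> : e = (a + 1) * e' by rewrite /e' mulrC divfK // gt_eqF // ltr_wpDl // ltW.
rewrite -/a; nra.
Qed.

(* Test the estimates on U_0 = 0 and a constant uncertainty: then E_k = A^k x
   and beta_dN = 0. *)
Lemma robustly_k_stable_expmx_cvg0 :
  robustly_k_stable nu P K Yd -> A ^+ k @[k --> \oo] --> (0 : 'M[R]_p).
Proof.
case=> chi1 [chi2 [zeta [[[_ chi1_0 _] _] _ [_ zeta_cvg0] stable]]].
apply: (mx_cvg0_vnorm nu_norm) => x.
have N_bnd : bounded_seq nu (fun=> Yd - x) by exists (nu (Yd - x)).
have [beta0 [beta0_ge0 [E_le _]]] := stable 0 _ N_bnd.
apply: (squeeze_cvgr _ (cvg_cst 0) (zeta_cvg0 _ beta0_ge0).2).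
apply: nearW => k; rewrite vnorm_ge0 //= -cl_error_cst (le_trans (E_le k)) //.
by rewrite beta_dN_cst // chi1_0 add0r.
Qed.

End ClosedLoop.

Theorem theorem1 (R : realType) (p m : nat) (nu : 'cV[R]_p -> R)
  (P : 'M[R]_(p, m)) (K : 'M[R]_(m, p)) (Yd : 'cV[R]_p) :
  is_vnorm nu ->
  (robustly_k_stable nu P K Yd <-> spectral_radius (1%:M - P *m K) < 1).
Proof.
move=> nu_norm; rewrite spectral_radius_lt1P; split.
  exact: robustly_k_stable_expmx_cvg0.
move=> /expmx_cvg0_geometric [C [lam [C_gt0 lam_gt0 lam_lt1 AC]]].
have [B B_gt0 AB] := vnorm_expmx_le nu_norm C_gt0 AC.
by apply: (robustly_k_stable_geometric Yd nu_norm B_gt0 _ AB); rewrite lam_gt0.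
Qed.
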